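(* For every integer $n\ge 3$, the crown graph $K_{n,n}\setminus M$, where $M$ is a perfect matching, is a distance-transitive graph of diameter $3$ with intersection array $\{n-1,n-2,1;1,n-2,n-1\}$. Coloring each pair of distinct vertices by $b$, $a$, $c$ according as their distance is $1$, $2$, $3$ yields a representation of the relation algebra $26_{65}$ on $2n$ vertices, and this representation is algebraic.
   Context: A connected graph is distance-transitive if whenever $\operatorname{dist}(x,y)=\operatorname{dist}(u,v)$ some automorphism maps $x\mapsto u$, $y\mapsto v$. A distance-regular graph of diameter $3$ has intersection array $\{b_0,b_1,b_2;c_1,c_2,c_3\}$ where, for $\operatorname{dist}(x,y)=i$, $b_i$ (resp. $c_i$) is the number of neighbours of $y$ at distance $i+1$ (resp. $i-1$) from $x$. A cycle type is the multiset of colors of the sides of a triangle, e.g. $abb$ = one side $a$, two sides $b$. $26_{65}$ is the finite symmetric integral relation algebra with atoms $1',a,b,c$ whose mandatory diversity cycle types are exactly $aaa, abb, abc$ (all of $bbb,ccc,baa,acc,caa,bcc,cbb$ forbidden). A representation on a set $X$ is a coloring of all 2-element subsets of $X$ by $a,b,c$, each color used, such that: for every mandatory type $\{h,i,j\}$, every edge $\{x,y\}$ colored $h$ (for each choice of $h$ among the type's colors) and each ordering $(i,j)$ of the remaining two colors, some $z$ has $\{x,z\}$ colored $i$, $\{z,y\}$ colored $j$; and no triangle of a forbidden type occurs. A representation on a finite set is algebraic if each color class (viewed as a set of ordered pairs, together with the diagonal as the identity class) is a single orbit on ordered pairs of the group of color-preserving permutations of $X$. *)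

From HB Require Import structures.
From mathcomp Require Import all_boot all_order all_fingroup.
Set Implicit Arguments. Unset Strict Implicit. Unset Printing Implicit Defensive.

Section Graphs.
Variable T : finType.
Variable e : rel T.

Definition walkb (x y : T) (k : nat) : bool :=
  [exists p : k.-tuple T, path e x p && (last x p == y)].

Definition distb (x y : T) (k : nat) : bool :=
  walkb x y k && [forall j : 'I_k, ~~ walkb x y j].

Definition connected_graph : Prop := forall x y : T, exists k, distb x y k.

Definition is_graph_aut (g : {perm T}) : Prop :=
  forall x y : T, e (g x) (g y) = e x y.

Definition distance_transitive : Prop :=
  connected_graph /\
  forall (x y u v : T) (k : nat), distb x y k -> distb u v k ->
    exists g : {perm T}, is_graph_aut g /\ g x = u /\ g y = v.

Definition diameter_is (d : nat) : Prop :=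
  (forall x y : T, exists2 k, k <= d & distb x y k) /\
  (exists x y : T, distb x y d).

Definition intersection_array3 (b0 b1 b2 c1 c2 c3 : nat) : Prop :=
  diameter_is 3 /\
  forall (x y : T) (i : nat),
    distb x y i ->
    (#|[set z | e y z & distb x z i.+1]| = nth 0 [:: b0; b1; b2; 0] i) /\
    (#|[set z | e y z & distb x z i.-1]| = nth 0 [:: 0; c1; c2; c3] i).
End Graphs.

(* vertices (i, side); the removed perfect matching is {(i,false),(i,true)} *)
Definition crown_adj (n : nat) : rel ('I_n * bool) :=
  fun x y => (x.2 != y.2) && (x.1 != y.1).

Arguments crown_adj : clear implicits.

Inductive color := ca | cb | cc.

Definition color_eqb (u v : color) : bool :=
  match u, v with
  | ca, ca | cb, cb | cc, cc => true
  | _, _ => false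
  end.

Lemma color_eqP : Equality.axiom color_eqb.
Proof. by case; case; constructor. Qed.

HB.instance Definition _ := hasDecEq.Build color color_eqP.

(* the mandatory diversity cycle types of 26_65 : aaa, abb, abc
   (as multisets of the three side colors) *)
Definition mandatory26_65 (h i j : color) : bool :=
  [|| perm_eq [:: h; i; j] [:: ca; ca; ca],
      perm_eq [:: h; i; j] [:: ca; cb; cb] |
      perm_eq [:: h; i; j] [:: ca; cb; cc]].

Definition forbidden26_65 (h i j : color) : bool := ~~ mandatory26_65 h i j.

Section Representation.
Variable X : finType.
Variable col : X -> X -> color.  (* only used on pairs of distinct points *)

Definition representation26_65 : Prop :=
  (* a coloring of 2-element subsets *)
  (forall x y : X, x != y -> col x y = col y x) /\
  (forall h : color, exists x y : X, x != y /\ col x y = h) /\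
  (forall (h i j : color), mandatory26_65 h i j ->
     forall x y : X, x != y -> col x y = h ->
       exists z : X, [/\ z != x, z != y, col x z = i & col z y = j]) /\
  (forall x y z : X, x != y -> y != z -> x != z ->
     ~~ forbidden26_65 (col x y) (col y z) (col x z)).

Definition color_preserving (g : {perm X}) : Prop :=
  forall x y : X, x != y -> col (g x) (g y) = col x y.

(* each color class (as a set of ordered pairs), and the diagonal,
   is a single orbit of the group of color-preserving permutations *)
Definition algebraic_rep : Prop :=
  (forall x u : X, exists g : {perm X}, color_preserving g /\ g x = u) /\
  (forall h : color, exists x y : X, x != y /\ col x y = h) /\
  (forall x y u v : X, x != y -> u != v -> col x y = col u v ->
     exists g : {perm X}, color_preserving g /\ g x = u /\ g y = v).
End Representation.

(* coloring by graph distance: b for 1, a for 2, c for 3 (and, vacuously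
   given diameter 3, any other value) *)
Definition dist_color (T : finType) (e : rel T) (x y : T) : color :=
  if distb e x y 1 then cb else if distb e x y 2 then ca else cc.

From mathcomp Require Import all_boot all_order all_fingroup.
Set Implicit Arguments. Unset Strict Implicit. Unset Printing Implicit Defensive.

(* A pair of vertices (i, s), (j, t) of the crown graph is described by the
   booleans (i == j, s == t). Distance and colour depend only on this
   description, and the maps (i, s) |-> (sigma i, s (+) f) preserve it while
   acting transitively on pairs with a given description; this gives both
   transitivity statements. Walks alternate sides, which bounds distances from
   below; conversely any description consistent with a triangle is realised by
   some third vertex once n >= 3, which yields short walks and the mandatory
   witnesses, while the forbidden cycle types are exactly the inconsistent ones. *)

Section Walks.
Variables (T : finType) (e : rel T).

Lemma walkb0 x y : walkb e x y 0 = (x == y).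
Proof.
rewrite /walkb; apply/existsP/eqP => [[p]|<-]; first by rewrite tuple0 /= => /eqP.
by exists [tuple]; rewrite /= eqxx.
Qed.

Lemma walkb1 x y : walkb e x y 1 = e x y.
Proof.
rewrite /walkb; apply/existsP/idP => [[p]|exy]; last by exists [tuple y]; rewrite /= exy eqxx.
by case/tupleP: p => z p; rewrite tuple0 /= andbT => /andP[exz /eqP <-].
Qed.

Lemma walkb_cons x z y k : e x z -> walkb e z y k -> walkb e x y k.+1.
Proof.
move=> exz /existsP[p /andP[zp zpy]].
by apply/existsP; exists [tuple of z :: p]; rewrite /= exz zp.
Qed.

Lemma distb_min x y d :
  walkb e x y d -> (forall k, walkb e x y k -> d <= k) ->
  forall k, distb e x y k = (k == d).
Proof.
move=> wd dmin k; apply/andP/eqP => [[wk /forallP nw]|->].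
  apply/eqP; rewrite eqn_leq dmin // andbT leqNgt; apply/negP => ltkd.
  by have := nw (Ordinal ltkd); rewrite wd.
by split=> //; apply/forallP => j; apply/negP => /dmin; rewrite leqNgt ltn_ord.
Qed.

End Walks.

Section FiniteTypes.
Variable T : finType.

Lemma exists_eq_pattern (a b : T) (p q : bool) : 2 < #|T| ->
  (p && q ==> (a == b)) -> ((a == b) ==> (p == q)) ->
  exists c, (a == c) = p /\ (c == b) = q.
Proof.
move=> T_gt2; case: p; case: q => /= hpq hab.
- by exists a; rewrite eqxx hpq.
- by exists a; rewrite eqxx; case: eqP hab.
- by exists b; rewrite eqxx; case: eqP hab.
have : 0 < #|~: [set a; b]|.
  by rewrite cardsCs setCK cards2 subn_gt0 (leq_ltn_trans _ T_gt2) // ltnS leq_b1.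
case/card_gt0P => c; rewrite !inE => /norP[/negbTE ca /negbTE cb].
by exists c; rewrite eq_sym ca cb.
Qed.

Lemma perm_two_point (a b a' b' : T) :
  (a == b) = (a' == b') -> exists s : {perm T}, s a = a' /\ s b = b'.
Proof.
move=> eq_ab; exists (tperm a a' * tperm (tperm a a' b) b')%g.
rewrite !permM tpermL; case: (eqVneq a b) eq_ab => [<- /esym/eqP <-|neq_ab eq_ab].
  by rewrite tpermL tpermR.
split; last by rewrite tpermL.
apply: tpermD; last by rewrite eq_sym -eq_ab.
by rewrite -[X in _ != X](tpermL a a') (inj_eq perm_inj) eq_sym.
Qed.

Lemma card_pattern (a b : T) (P : pred bool) :
  #|[set k | (k != b) && P (a == k)]| = (a != b) && P true + (#|T| - (a != b).+1) * P false.
Proof.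
rewrite (cardsD1 a) !inE eqxx; congr (_ + _).
set A := _ :\ a; have AE : A = ~: [set a; b] :&: [set k | P false].
  apply/setP => k; rewrite !inE negb_or andbA.
  by case: (eqVneq k a) => [->|/negbTE nka]; rewrite ?eqxx // (eq_sym a) nka.
rewrite AE; case: (P false); last by rewrite setI0 cards0 muln0.
by rewrite setIT muln1 cardsCs setCK cards2.
Qed.
End FiniteTypes.

Definition rel_dist (r : bool * bool) : nat :=
  match r with
  | (true, true) => 0 | (false, false) => 1 | (false, true) => 2 | (true, false) => 3
  end.

Definition rel_color (r : bool * bool) : color :=
  match r with (true, _) => cc | (false, true) => ca | (false, false) => cb end.

Definition color_rel (c : color) : bool * bool :=
  match c with ca => (false, true) | cb => (false, false) | cc => (true, false) end.

(* [r1], [r2], [r] can be the descriptions of the pairs xz, zy, xy of a triangle. *)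
Definition composable (r1 r2 r : bool * bool) : bool :=
  [&& r.2 == (r1.2 == r2.2), r1.1 && r2.1 ==> r.1 & r.1 ==> (r1.1 == r2.1)].

Lemma rel_dist_inj : injective rel_dist.
Proof. by case=> [[] []] [[] []]. Qed.

Lemma color_relK : cancel color_rel rel_color.
Proof. by case. Qed.

Lemma color_rel_offdiag c : color_rel c != (true, true).
Proof. by case: c. Qed.

Lemma rel_color_inj r r' : r != (true, true) -> r' != (true, true) ->
  rel_color r = rel_color r' -> r = r'.
Proof. by case: r r' => [[] []] [[] []]. Qed.

Lemma mandatory_composable h i j r : mandatory26_65 h i j ->
  r != (true, true) -> rel_color r = h -> composable (color_rel i) (color_rel j) r.
Proof. by case: h i j r => [] [] [] [[] []]. Qed.

Lemma composable_mandatory r1 r2 r :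
  r1 != (true, true) -> r2 != (true, true) -> r != (true, true) ->
  composable r1 r2 r -> mandatory26_65 (rel_color r1) (rel_color r2) (rel_color r).
Proof. by case: r1 r2 r => [[] []] [[] []] [[] []]. Qed.

Section Crown.
Variable n : nat.
Local Notation V := ('I_n * bool)%type.
Local Notation adj := (crown_adj n).

Definition crown_rel (x y : V) : bool * bool := (x.1 == y.1, x.2 == y.2).

Lemma crown_rel_sym x y : crown_rel x y = crown_rel y x.
Proof. by rewrite /crown_rel !(eq_sym x.1) (eq_sym x.2). Qed.

Lemma crown_rel_diag x y : (crown_rel x y == (true, true)) = (x == y).
Proof. by case: x y => [a s] [b t]; rewrite !xpair_eqE !eqb_id. Qed.

Lemma crown_adjE x y : adj x y = (crown_rel x y == (false, false)).
Proof. by rewrite /crown_adj xpair_eqE !eqbF_neg andbC. Qed.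

Lemma crown_rel_composable x z y :
  composable (crown_rel x z) (crown_rel z y) (crown_rel x y).
Proof.
apply/and3P; split=> /=.
- by case: x.2 y.2 z.2 => [] [] [].
- by apply/implyP => /andP[/eqP-> /eqP->].
- by apply/implyP => /eqP->; rewrite (eq_sym y.1).
Qed.

Lemma crown_path_side x p : path adj x p -> (last x p).2 = x.2 (+) odd (size p).
Proof.
elim: p x => [|z p IHp] x /=; first by rewrite addbF.
case/andP=> /andP[xz _] /IHp->; move: xz.
by case: x.2 z.2 (odd (size p)) => [] [] [].
Qed.

Lemma crown_walk_side x y k : walkb adj x y k -> y.2 = x.2 (+) odd k.
Proof. by case/existsP=> p /andP[/crown_path_side + /eqP <-]; rewrite size_tuple. Qed.

Lemma crown_walk_ge x y k : walkb adj x y k -> rel_dist (crown_rel x y) <= k.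
Proof.
case: k => [|[|[|k]]] w; first by move: w; rewrite walkb0 -crown_rel_diag => /eqP->.
- by move: w; rewrite walkb1 crown_adjE => /eqP->.
- move/crown_walk_side: w => /= ->; rewrite /crown_rel addbF eqxx.
  by case: (x.1 == y.1).
- by case: crown_rel => [[] []].
Qed.

Definition crown_sym (g : {perm V}) : Prop :=
  forall z w, crown_rel (g z) (g w) = crown_rel z w.

Lemma crown_homogeneous x y u v : crown_rel x y = crown_rel u v ->
  exists g, crown_sym g /\ g x = u /\ g y = v.
Proof.
case: u v => [a s] [b t] [/= idx_xy side_xy].
have [sigma [sx sy]] := perm_two_point idx_xy.
have g_inj : injective (fun z : V => (sigma z.1, z.2 (+) (x.2 (+) s))).
  by move=> [c p] [d q] [/perm_inj-> /addIb->].
exists (perm g_inj); split=> [z w|]; rewrite !permE /crown_rel /=.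
  by rewrite (inj_eq perm_inj) (inj_eq (@addIb _)).
rewrite sx sy addKb; split=> //; congr pair.
by clear g_inj; case: x.2 y.2 s t side_xy => [] [] [] [].
Qed.

Lemma crown_sym_aut g : crown_sym g -> is_graph_aut adj g.
Proof. by move=> gsym z w; rewrite !crown_adjE gsym. Qed.

Section AtLeastThree.
Hypothesis n_gt2 : 2 < n.

Lemma crown_rel_factor x y r1 r2 : composable r1 r2 (crown_rel x y) ->
  exists z, crown_rel x z = r1 /\ crown_rel z y = r2.
Proof.
case: r1 r2 => [p1 s1] [p2 s2] /and3P[/= side_xy idx1 idx2].
have [|c [xc cy]] := exists_eq_pattern _ idx1 idx2; first by rewrite card_ord.
exists (c, if s1 then x.2 else ~~ x.2); rewrite /crown_rel /= xc cy.
by case: s1 s2 x.2 y.2 side_xy => [] [] [] [] /=.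
Qed.

Lemma crown_rel_surj x r : exists y, crown_rel x y = r.
Proof.
have [|y [xy _]] := @crown_rel_factor x x r r; last by exists y.
by case: r => [[] []]; rewrite /composable /crown_rel !eqxx.
Qed.

Lemma crown_walk_dist x y : walkb adj x y (rel_dist (crown_rel x y)).
Proof.
have walk2 u v : crown_rel u v = (false, true) -> walkb adj u v 2.
  move=> uv; have [|z [uz zv]] := @crown_rel_factor u v (false, false) (false, false).
    by rewrite uv.
  by apply: (@walkb_cons _ _ _ z); rewrite ?walkb1 crown_adjE ?uz ?zv.
case xy: (crown_rel x y) => [[] []] /=.
- by move/eqP: xy; rewrite crown_rel_diag walkb0.
- have [|z [xz zy]] := @crown_rel_factor x y (false, false) (false, true).
    by rewrite xy.
  by apply: (@walkb_cons _ _ _ z); [rewrite crown_adjE xz | exact: walk2].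
- exact: walk2.
- by rewrite walkb1 crown_adjE xy.
Qed.

Lemma crown_distbE x y k : distb adj x y k = (k == rel_dist (crown_rel x y)).
Proof. exact/distb_min/crown_walk_ge/crown_walk_dist. Qed.

Lemma crown_colorE x y : dist_color adj x y = rel_color (crown_rel x y).
Proof. by rewrite /dist_color !crown_distbE; case: crown_rel => [[] []]. Qed.

Lemma card_crown_nbhd x y m :
  #|[set z | adj y z & distb adj x z m]| =
    (x.1 != y.1) && (rel_dist (true, x.2 != y.2) == m)
    + (n - (x.1 != y.1).+1) * (rel_dist (false, x.2 != y.2) == m).
Proof.
pose P := [pred p | rel_dist (p, x.2 != y.2) == m].
rewrite -[n in n - _]card_ord -(card_pattern x.1 y.1 P).
rewrite -[RHS]muln1 -(cards1 (~~ y.2)) -cardsX.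
apply: eq_card => -[k u]; rewrite !inE crown_adjE crown_distbE /crown_rel /= xpair_eqE.
rewrite !eqbF_neg (eq_sym y.1) (eq_sym m).
by case: (k == y.1) (x.1 == k) u x.2 y.2 => [] [] [] [] [] /=; rewrite ?andbF ?eqxx ?andbT.
Qed.

Lemma crown_sym_color g : crown_sym g -> color_preserving (dist_color adj) g.
Proof. by move=> gsym z w _; rewrite !crown_colorE gsym. Qed.

Lemma crown_colors_used c : exists x y : V, x != y /\ dist_color adj x y = c.
Proof.
pose x : V := (Ordinal (ltnW (ltnW n_gt2)), true).
have [y xy] := crown_rel_surj x (color_rel c).
by exists x, y; rewrite -crown_rel_diag crown_colorE xy color_rel_offdiag color_relK.
Qed.

Lemma crown_distance_transitive : distance_transitive adj.
Proof.
split=> [x y|x y u v k]; first by exists (rel_dist (crown_rel x y)); rewrite crown_distbE.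
rewrite !crown_distbE => /eqP-> /eqP/rel_dist_inj/crown_homogeneous[g [/crown_sym_aut]].
by exists g.
Qed.

Lemma crown_intersection_array :
  intersection_array3 adj n.-1 (n - 2) 1 1 (n - 2) n.-1.
Proof.
split.
  split=> [x y|].
    by exists (rel_dist (crown_rel x y)); [case: crown_rel => [[] []] | rewrite crown_distbE].
  pose i0 : 'I_n := Ordinal (ltnW (ltnW n_gt2)).
  by exists (i0, true), (i0, false); rewrite crown_distbE /crown_rel /= eqxx.
move=> [a s] [b t] i; rewrite crown_distbE => /eqP->; rewrite !card_crown_nbhd /crown_rel /=.
by case: (a == b); case: s t => [] [] /=; rewrite ?muln0 ?muln1 ?subn1.
Qed.

Lemma crown_representation : representation26_65 (dist_color adj).
Proof.
split; [|split; [exact: crown_colors_used|split]].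
- by move=> x y _; rewrite !crown_colorE crown_rel_sym.
- move=> h i j hm x y xy; rewrite crown_colorE => hxy.
  have := mandatory_composable hm _ hxy; rewrite crown_rel_diag.
  case/(_ xy)/crown_rel_factor=> z [xz zy]; exists z.
  rewrite -!crown_rel_diag !crown_colorE crown_rel_sym xz zy.
  by rewrite !color_rel_offdiag !color_relK.
- move=> x y z xy yz xz; rewrite /forbidden26_65 negbK !crown_colorE.
  by apply: composable_mandatory; rewrite ?crown_rel_diag ?crown_rel_composable.
Qed.

Lemma crown_algebraic : algebraic_rep (dist_color adj).
Proof.
split; [|split; [exact: crown_colors_used|]].
- move=> x u; have /crown_homogeneous[g [/crown_sym_color gcol [gx _]]] :
    crown_rel x x = crown_rel u u by rewrite /crown_rel !eqxx.
  by exists g.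
- move=> x y u v xy uv; rewrite !crown_colorE => /rel_color_inj.
  rewrite !crown_rel_diag => /(_ xy uv)/crown_homogeneous[g [/crown_sym_color gcol guv]].
  by exists g.
Qed.

End AtLeastThree.

End Crown.

Theorem mainTheorem8 (n : nat) (hn : 3 <= n) :
  distance_transitive (crown_adj n) /\
  intersection_array3 (crown_adj n) n.-1 (n - 2) 1 1 (n - 2) n.-1 /\
  #|{: 'I_n * bool}| = 2 * n /\
  representation26_65 (dist_color (crown_adj n)) /\
  algebraic_rep (dist_color (crown_adj n)).
Proof.
split; first exact: crown_distance_transitive.
split; first exact: crown_intersection_array.
split; first by rewrite card_prod card_ord card_bool mulnC.
by split; [exact: crown_representation | exact: crown_algebraic].
Qed.
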